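(* Let $m,k_1,k_2$ be integers with $m\ge 2$. There exists a set $A\subseteq\mathbb{Z}_m$ such that $\hat{r}_{k_1,k_2}(A,n)=\hat{r}_{k_1,k_2}(\mathbb{Z}_m\setminus A,n)$ for all $n\in\mathbb{Z}_m$ if and only if $m$ is even and one of the following holds: (i) $k_1$ and $k_2$ have the same parity; (ii) $k_1$ and $k_2$ have different parities and $v_2(k_i)<v_2(m)$ for $i=1,2$.
   Context: $\mathbb{Z}_m$ denotes the set of residue classes modulo $m$. For integers $k_1,k_2$, a set $A\subseteq\mathbb{Z}_m$ and $n\in\mathbb{Z}_m$, $\hat{r}_{k_1,k_2}(A,n)$ denotes the number of ordered pairs $(a_1,a_2)\in A\times A$ with $n=k_1a_1+k_2a_2$ in $\mathbb{Z}_m$. For a nonzero integer $k$, $v_2(k)=t$ means $2^t\mid k$ and $2^{t+1}\nmid k$; by convention $v_2(0)=+\infty$. *)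

From HB Require Import structures.
From mathcomp Require Import all_boot all_order all_algebra.
Set Implicit Arguments. Unset Strict Implicit. Unset Printing Implicit Defensive.
Import Order.TTheory GRing.Theory Num.Theory.

Definition rhat (m : nat) (k1 k2 : int) (A : {set 'Z_m}) (n : 'Z_m) : nat :=
  #|[set p : 'Z_m * 'Z_m | [&& p.1 \in A, p.2 \in A &
        n == (p.1 *~ k1 + p.2 *~ k2)%R]]|.

(* 2-adic valuation of an integer, with v2 0 = +infinity encoded as None. *)
Definition v2 (k : int) : option nat :=
  if k == 0%R then None else Some (logn 2 `|k|%N).

Definition v2_lt (k : int) (m : nat) : bool :=
  match v2 k with
  | None => false
  | Some t => (t < logn 2 m)%N
  end.

From HB Require Import structures.
From mathcomp Require Import all_boot all_order all_algebra.
From mathcomp Require Import zify ring.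
Import Order.TTheory GRing.Theory Num.Theory.
Set Implicit Arguments. Unset Strict Implicit. Unset Printing Implicit Defensive.

(* The proof works in an arbitrary finite abelian group G first.
   - Necessity: summing the representation functions over all n gives
     #|A|^2 = #|~: A|^2, so #|G| is even; summing them over a set C such that
     k1 a1 + k2 a2 lies in C iff a2 does gives #|A :&: C| = #|~: A :&: C|, so
     #|C| is even as well.  In Z_m with k2 odd and 2^v2(m) dividing k1, the
     multiples of q = 2^v2(m) form such a C of odd size m/q: hence v2(k1) < v2(m).
   - Sufficiency: if translation by h exchanges A and ~: A, then shifting
     pairs by (h, h) (when h k1 + h k2 = 0), or combining the shifts (h, 0) and
     (t, h) (when h k1 = 0 = t k1 + h k2), shows that A is balanced.  In Z_m,
     m even, take A = [0, m/2) and h = m/2; for k1 even and k2 odd the element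
     t with t k1 = m/2 exists because gcd(m, k1) divides m/2 iff v2(k1) < v2(m).
   The theorem then combines the two directions, reducing the mixed-parity case
   to "k2 odd" by the symmetry (k1, k2) <-> (k2, k1). *)

Section Representations.
Variables (G : finZmodType) (k1 k2 : int).

Definition lin (p : G * G) : G := (p.1 *~ k1 + p.2 *~ k2)%R.

Definition rep (X Y : {set G}) (n : G) : nat :=
  #|[set p : G * G | [&& p.1 \in X, p.2 \in Y & n == lin p]]|.

Definition balanced (A : {set G}) : Prop :=
  forall n, rep A A n = rep (~: A) (~: A) n.

Lemma sum_rep (X Y C : {set G}) :
  (forall a1 a2, (lin (a1, a2) \in C) = (a2 \in C)) ->
  (\sum_(n in C) rep X Y n = #|X| * #|Y :&: C|)%N.
Proof.
move=> hC; rewrite -cardsX.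
have -> : setX X (Y :&: C) =
          [set p : G * G | [&& p.1 \in X, p.2 \in Y & lin p \in C]].
  by apply/setP => -[a1 a2]; rewrite !inE /= hC.
rewrite -sum1_card (partition_big lin (mem C)) => [|p]; last by rewrite inE => /and3P[].
apply: eq_bigr => n Cn; rewrite /rep -sum1_card; apply: eq_bigl => p.
rewrite !inE eq_sym; case: eqP => [-> | _]; by rewrite ?Cn ?andbT ?andbF.
Qed.

Lemma rep_shift (X Y X' Y' : {set G}) (t1 t2 n : G) :
  (forall x, ((x + t1)%R \in X') = (x \in X)) ->
  (forall y, ((y + t2)%R \in Y') = (y \in Y)) ->
  (t1 *~ k1 + t2 *~ k2 = 0)%R ->
  rep X Y n = rep X' Y' n.
Proof.
move=> hX hY ht; pose f (p : G * G) := (p.1 + t1, p.2 + t2)%R.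
have f_inj : injective f.
  by move=> [a b] [c d] [/addIr-> /addIr->].
rewrite /rep -[RHS](card_preimset _ f_inj); apply: eq_card => p.
by rewrite !inE /= hX hY /lin /= !mulrzDl addrACA ht addr0.
Qed.

Lemma rep_setTl (A Y : {set G}) (n : G) :
  rep setT Y n = (rep A Y n + rep (~: A) Y n)%N.
Proof.
rewrite /rep -(cardsID [set p : G * G | p.1 \in A]); congr addn.
  by apply: eq_card => p; rewrite !inE andbC.
by apply: eq_card => p; rewrite !inE.
Qed.

Lemma balanced_trace (A C : {set G}) :
  balanced A -> (forall a1 a2, (lin (a1, a2) \in C) = (a2 \in C)) ->
  (#|A| * #|A :&: C| = #|~: A| * #|~: A :&: C|)%N.
Proof. by move=> bal hC; rewrite -!sum_rep //; apply: eq_bigr. Qed.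

Lemma balanced_card (A : {set G}) : balanced A -> #|A| = #|~: A|.
Proof.
move=> bal; have hT a1 a2 : (lin (a1, a2) \in setT) = (a2 \in setT) by rewrite !inE.
by have /eqP := balanced_trace bal hT; rewrite !setIT !mulnn eqn_sqr => /eqP.
Qed.

Lemma balanced_order_even (A : {set G}) : balanced A -> ~~ odd #|G|.
Proof.
by move=> /balanced_card cardA; rewrite -(cardsC A) -cardA addnn odd_double.
Qed.

(* A balanced set also splits every such C in two halves, so #|C| is even. *)
Lemma balanced_trace_even (A C : {set G}) :
  balanced A -> (forall a1 a2, (lin (a1, a2) \in C) = (a2 \in C)) ->
  ~~ odd #|C|.
Proof.
move=> bal hC; have cardA := balanced_card bal.
have A_gt0 : (0 < #|A|)%N.
  have : (0 < #|G|)%N by apply/card_gt0P; exists 0%R.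
  by rewrite -(cardsC A) -cardA addnn double_gt0.
have /eqP := balanced_trace bal hC; rewrite -cardA eqn_pmul2l // => /eqP halves.
by rewrite -(cardsID A C) setDE (setIC C A) (setIC C) halves addnn odd_double.
Qed.

Definition swaps (A : {set G}) (h : G) : Prop :=
  forall x, ((x + h)%R \in A) = (x \notin A).

Lemma swaps_compl (A : {set G}) (h x : G) :
  swaps A h -> ((x + h)%R \in ~: A) = (x \in A).
Proof. by move=> hA; rewrite inE hA negbK. Qed.

Lemma balanced_diag_shift (A : {set G}) (h : G) :
  swaps A h -> (h *~ k1 + h *~ k2 = 0)%R -> balanced A.
Proof. by move=> hA h0 n; apply: rep_shift h0 => x; apply: swaps_compl. Qed.

(* Sufficient condition for balance via the shifts (h, 0) and (t, h):
   they give rep A Y = rep (~: A) Y for every Y, and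
   rep G A = rep G (~: A), which together force balance. *)
Lemma balanced_mixed_shift (A : {set G}) (h t : G) :
  swaps A h -> (h *~ k1 = 0)%R -> (t *~ k1 + h *~ k2 = 0)%R -> balanced A.
Proof.
move=> hA h1 ht n.
have shift1 (Y : {set G}) : rep A Y n = rep (~: A) Y n.
  apply: (rep_shift (t2 := 0%R)) => [x|y|]; first exact: swaps_compl.
    by rewrite addr0.
  by rewrite h1 mul0rz addr0.
have shift2 : rep setT A n = rep setT (~: A) n.
  by apply: rep_shift ht => x; [rewrite !inE | apply: swaps_compl].
by move: shift2; rewrite !(rep_setTl A) -!shift1; lia.
Qed.
End Representations.

Lemma rep_swap (G : finZmodType) (k1 k2 : int) (X Y : {set G}) (n : G) :
  rep k1 k2 X Y n = rep k2 k1 Y X n.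
Proof.
have swap_inj : injective (fun p : G * G => (p.2, p.1)).
  by move=> [a b] [c d] [-> ->].
rewrite /rep -(card_preimset _ swap_inj); apply: eq_card => p.
by rewrite !inE /lin /= (addrC (p.1 *~ k2)%R) andbCA.
Qed.

Lemma balanced_swap (G : finZmodType) (k1 k2 : int) (A : {set G}) :
  balanced k1 k2 A -> balanced k2 k1 A.
Proof. by move=> bal n; rewrite rep_swap [RHS]rep_swap bal. Qed.

Lemma intmul_order2 (V : zmodType) (x : V) (k : int) :
  (x *+ 2 = 0 -> x *~ k = x *+ odd `|k|)%R.
Proof.
move=> x2; have xn n : (x *+ n = x *+ odd n)%R.
  by rewrite -{1}(odd_double_half n) mulrnDr -mul2n mulrnA x2 mul0rn addr0.
have Nx : (- x = x)%R.
  by apply/eqP; rewrite eq_sym -subr_eq0 opprK -mulr2n x2.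
case: k => j; first exact: xn.
rewrite NegzE mulrNz abszN -pmulrn xn.
by case: odd; rewrite ?Nx ?oppr0.
Qed.

Lemma even_half_double (m : nat) : ~~ odd m -> m./2 * 2 = m.
Proof. by move=> m_even; rewrite muln2 -[RHS](odd_double_half m) (negbTE m_even). Qed.

Lemma v2_lt_odd (m : nat) (k : int) :
  0 < m -> ~~ odd m -> odd `|k| -> v2_lt k m.
Proof.
move=> m_gt0 m_even k_odd; rewrite /v2_lt /v2.
have -> : (k == 0%R) = false by apply: contraTF k_odd => /eqP->.
by rewrite logn_coprime ?coprime2n // logn_gt0 mem_primes m_gt0 dvdn2 m_even.
Qed.

Lemma dvdn_not_v2_lt (m : nat) (k : int) : ~~ v2_lt k m -> 2 ^ logn 2 m %| `|k|.
Proof.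
rewrite /v2_lt /v2; case: eqP => [-> // | /eqP k_neq0].
by rewrite -ltnNge => lt_log; rewrite pfactor_dvdn // ?absz_gt0 // ltnW.
Qed.

Lemma v2_lt_gcdn_half (m : nat) (k : int) :
  ~~ odd m -> v2_lt k m -> gcdn m `|k| %| m./2.
Proof.
rewrite /v2_lt /v2; case: eqP => // /eqP k_neq0 m_even lt_log.
have k_gt0 : 0 < `|k| by rewrite absz_gt0.
have m_gt0 : 0 < m by move: lt_log; case: (m).
set d := gcdn m `|k|; have d_gt0 : 0 < d by rewrite gcdn_gt0 m_gt0.
set w := m %/ d; have mE : m = w * d by rewrite divnK // dvdn_gcdl.
have w_gt0 : 0 < w by move: m_gt0; rewrite mE muln_gt0 => /andP[].
have w_even : ~~ odd w.
  apply: contraTN lt_log => w_odd; rewrite -leqNgt mE lognM //.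
  by rewrite logn_coprime ?coprime2n // dvdn_leq_log // dvdn_gcdr.
by rewrite -(dvdn_pmul2r (isT : 0 < 2)) (even_half_double m_even) mE (mulnC w) dvdn_pmul2l // dvdn2.
Qed.

(* The cyclic group Z_m, with m >= 2 written m'.+2 so that 'Z_m is 'I_m. *)
Section CyclicGroup.
Variable m' : nat.
Local Notation m := m'.+2.

Section Multiples.
Variable q : nat.
Hypothesis q_dvd_m : q %| m.

Lemma dvdn_modm (n : nat) : (q %| n %% m) = (q %| n).
Proof. by rewrite /dvdn (modn_dvdm _ q_dvd_m). Qed.

Lemma dvdn_val_intmul (x : 'Z_m) (k : int) :
  (q %| val (x *~ k)%R) = (q %| val x * `|k|).
Proof.
case: k => n; first by rewrite -pmulrn Zp_mulrn /= dvdn_modm.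
rewrite NegzE mulrNz abszN -pmulrn /= dvdn_modm dvdn_subr ?(ltnW (ltn_ord _)) //.
by rewrite Zp_mulrn /= dvdn_modm.
Qed.

Definition multiples : {set 'Z_m} := [set x | q %| val x].

Lemma lin_multiples (k1 k2 : int) (a1 a2 : 'Z_m) :
  q %| `|k1| -> coprime q `|k2| ->
  (lin k1 k2 (a1, a2) \in multiples) = (a2 \in multiples).
Proof.
move=> q_k1 q_k2; rewrite !inE /lin /= dvdn_modm dvdn_addr.
  by rewrite dvdn_val_intmul Gauss_dvdl.
by rewrite dvdn_val_intmul dvdn_mull.
Qed.

Lemma card_multiples : #|multiples| = m %/ q.
Proof.
have q_gt0 : 0 < q by apply: dvdn_gt0 q_dvd_m.
set c := m %/ q; have mE : m = c * q by rewrite divnK.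
pose f (j : 'I_c) : 'Z_m := inZp (j * q).
have val_f (j : 'I_c) : val (f j) = j * q.
  by rewrite /= modn_small // mE ltn_pmul2r.
have f_inj : injective f.
  by move=> i j /(congr1 val); rewrite !val_f => /eqP; rewrite eqn_pmul2r // => /eqP/val_inj.
rewrite -[RHS](card_ord c) -(card_imset _ f_inj); apply: eq_card => x.
rewrite inE; apply/idP/imsetP => [q_x | [j _ ->]]; last by rewrite val_f dvdn_mull.
have x_lt : val x %/ q < c by rewrite ltn_divLR // -mE; exact: ltn_ord.
exists (Ordinal x_lt) => //; apply: val_inj; by rewrite val_f divnK.
Qed.
End Multiples.

Lemma intmul_reaches (k : int) (n : nat) :
  gcdn m `|k| %| n -> exists t : 'Z_m, (t *~ k = n%:R)%R.
Proof.
case/dvdnP=> c ->; have [u [v bezout]] := Bezoutz m k.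
exists ((c%:Z * v)%:~R)%R.
have e : (c%:Z * v * k = (c * gcdn m `|k|)%:Z - (c%:Z * u) * m%:Z)%R.
  by rewrite PoszM (_ : Posz (gcdn m `|k|) = gcdz m k) // -bezout; ring.
have m0 : ((m : int)%:~R = 0 :> 'Z_m)%R by exact: (pchar_Zp (p := m)).
by rewrite -mulrzr -intrM e intrB intrM m0 mulr0 subr0.
Qed.

Section Halves.
Hypothesis m_even : ~~ odd m.

Definition half : 'Z_m := (m./2)%:R%R.
Definition lower_half : {set 'Z_m} := [set x | val x < m./2].

Lemma half_order2 : (half *+ 2 = 0)%R.
Proof. by rewrite /half -mulrnA even_half_double // pchar_Zp. Qed.

Lemma swaps_lower_half : swaps lower_half half.
Proof.
move=> x; rewrite !inE.
have -> : val (x + half)%R = (val x + m./2) %% m.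
  by rewrite /= /half Zp_nat /= modnDmr.
have mE := even_half_double m_even; have x_lt : val x < m by exact: ltn_ord.
move: (val x) x_lt mE; set h := m./2 => v v_lt mE.
have -> : (v + h) %% m = if v < h then v + h else v - h.
  case: ltnP => v_h; first by rewrite modn_small //; lia.
  by rewrite (_ : v + h = v - h + m) ?modnDr ?modn_small //; lia.
by case: ifP; lia.
Qed.
End Halves.

(* Necessity of the valuation condition: with k2 odd, the multiples of
   q = 2^v2(m) would be an odd-sized set that every balanced set halves. *)
Lemma balanced_v2_lt (k1 k2 : int) (A : {set 'Z_m}) :
  balanced k1 k2 A -> odd `|k2| -> v2_lt k1 m.
Proof.
move=> bal k2_odd; apply: contraT => /dvdn_not_v2_lt q_k1.
have [c c_odd mE] := pfactor_coprime (p := 2) (n := m) isT isT.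
have q_m : 2 ^ logn 2 m %| m by rewrite {2}mE dvdn_mull.
have q_k2 : coprime (2 ^ logn 2 m) `|k2| by rewrite coprimeXl // coprime2n.
have hC a1 a2 := lin_multiples q_m a1 a2 q_k1 q_k2.
have := balanced_trace_even bal hC.
by rewrite card_multiples // {1}mE mulnK ?expn_gt0 // -coprime2n c_odd.
Qed.

Lemma balanced_necessary (k1 k2 : int) (A : {set 'Z_m}) :
  balanced k1 k2 A ->
  ~~ odd m /\
  ((odd `|k1| = odd `|k2|) \/
   (odd `|k1| <> odd `|k2| /\ v2_lt k1 m /\ v2_lt k2 m)).
Proof.
move=> bal; have m_even : ~~ odd m by move/balanced_order_even: bal; rewrite card_ord.
have v2_lt_of_odd k : odd `|k| -> v2_lt k m := v2_lt_odd (ltn0Sn _) m_even.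
split=> //; case: (boolP (odd `|k1| == odd `|k2|)) => /eqP parity; [by left | right].
split=> //; case k1_odd: (odd `|k1|) parity => parity.
  by split; [exact: v2_lt_of_odd | exact: balanced_v2_lt (balanced_swap bal) k1_odd].
have k2_odd : odd `|k2| by case: (odd `|k2|) parity.
by split; [exact: balanced_v2_lt bal k2_odd | exact: v2_lt_of_odd].
Qed.

Lemma lower_half_balanced (k1 k2 : int) :
  ~~ odd m ->
  ((odd `|k1| = odd `|k2|) \/
   (odd `|k1| <> odd `|k2| /\ v2_lt k1 m /\ v2_lt k2 m)) ->
  balanced k1 k2 lower_half.
Proof.
move=> m_even; have half_intmul := intmul_order2 _ (half_order2 m_even).
have swaps_half := swaps_lower_half m_even.
have mixed (l1 l2 : int) : ~~ odd `|l1| -> odd `|l2| -> v2_lt l1 m ->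
    balanced l1 l2 lower_half.
  move=> l1_even l2_odd /(v2_lt_gcdn_half m_even)/intmul_reaches[t ht].
  apply: (balanced_mixed_shift (t := t) swaps_half).
    by rewrite half_intmul (negbTE l1_even).
  by rewrite half_intmul l2_odd ht -mulr2n half_order2.
case=> [parity | [parity [lt1 lt2]]].
  apply: balanced_diag_shift swaps_half _.
  by rewrite !half_intmul parity; case: odd; rewrite ?addr0 // -mulr2n half_order2.
case k1_odd: (odd `|k1|) parity => parity.
  have k2_even : ~~ odd `|k2| by case: (odd `|k2|) parity.
  by apply: balanced_swap; apply: mixed; rewrite ?k1_odd.
have k2_odd : odd `|k2| by case: (odd `|k2|) parity.
by apply: mixed; rewrite ?k1_odd.
Qed.
End CyclicGroup.

Theorem corollary1 (m : nat) (k1 k2 : int) (hm : (1 < m)%N) :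
  (exists A : {set 'Z_m},
      forall n : 'Z_m, rhat k1 k2 A n = rhat k1 k2 (~: A) n)
  <->
  (~~ odd m /\
   ((odd `|k1|%N = odd `|k2|%N) \/
    (odd `|k1|%N <> odd `|k2|%N /\ v2_lt k1 m /\ v2_lt k2 m))).
Proof.
case: m hm => [|[|m']] // _; split=> [[A bal] | [m_even conds]].
  exact: balanced_necessary bal.
by exists (lower_half m'); apply: lower_half_balanced.
Qed.
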